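(* Let $S$ be a ubiquitously dense subset of $[0,\infty)$ with $0\in S$, and put $\kappa=\operatorname{card}(S)$. Let $X$ be a discrete topological space with $\operatorname{card}(X)\le\kappa$, let $d\in\mathrm{Met}(X)$ and $\epsilon\in(0,\infty)$. Then there exists $e\in\mathrm{Met}(X;S)$ such that: (1) $\mathcal{D}_X(d,e)\le\epsilon$; (2) $e$ is uniformly discrete; (3) $e(x,y)<e(x,z)+e(z,y)$ for all pairwise distinct $x,y,z\in X$; (4) $e$ is strongly rigid.
   Context: A subset $S$ of a topological space $Y$ is ubiquitously dense if $\operatorname{card}(U\cap S)=\operatorname{card}(S)$ for every non-empty open $U\subseteq Y$. For a topological space $X$ and $S\subseteq[0,\infty)$ with $0\in S$, $\mathrm{Met}(X;S)$ is the set of metrics on $X$ with values in $S$ generating the topology of $X$, and $\mathrm{Met}(X)=\mathrm{Met}(X;[0,\infty))$; $\mathcal{D}_X(d,e)=\sup_{x,y\in X}|d(x,y)-e(x,y)|$. A metric $e$ is uniformly discrete if there is $c>0$ with $c<e(x,y)$ for all distinct $x,y$. A metric $e$ is strongly rigid if $e(x,y)=e(u,v)\neq0$ implies $\{x,y\}=\{u,v\}$. *)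

From HB Require Import structures.
From mathcomp Require Import all_boot all_order all_algebra.
From mathcomp Require Import all_classical all_reals all_analysis.
Set Implicit Arguments. Unset Strict Implicit. Unset Printing Implicit Defensive.
Import Order.TTheory GRing.Theory Num.Theory.
Import numFieldNormedType.Exports.
Local Open Scope classical_set_scope.
Local Open Scope ring_scope.

(* [S] is ubiquitously dense in the subspace Y = [0, oo) of R:
   for every non-empty relatively open U of Y, card (U `&` S) = card S.
   Relatively open subsets of Y are exactly V `&` Y with V open in R. *)
Definition ubiquitously_dense_nonneg (R : realType) (S : set R) : Prop :=
  forall V : set R, open V ->
    let U := V `&` [set x | 0 <= x] in
    U !=set0 -> ((U `&` S) #= S)%card.

Definition is_metric (R : realType) (X : Type) (d : X -> X -> R) : Prop :=
  [/\ (forall x y, 0 <= d x y),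
      (forall x y, d x y = 0 <-> x = y),
      (forall x y, d x y = d y x) &
      (forall x y z, d x y <= d x z + d z y)].

Definition metric_open (R : realType) (X : Type) (d : X -> X -> R) (A : set X)
  : Prop :=
  forall x, A x -> exists2 r : R, 0 < r & forall y, d x y < r -> A y.

Definition Met (R : realType) (X : topologicalType) (S : set R)
  (d : X -> X -> R) : Prop :=
  [/\ is_metric d,
      (forall A : set X, open A <-> metric_open d A) &
      (forall x y, S (d x y))].

Definition DX (R : realType) (X : Type) (d e : X -> X -> R) : \bar R :=
  ereal_sup [set (`|d xy.1 xy.2 - e xy.1 xy.2|)%:E | xy in [set: X * X]].

Definition uniformly_discrete (R : realType) (X : Type) (e : X -> X -> R)
  : Prop :=
  exists2 c : R, 0 < c & forall x y, x <> y -> c < e x y.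

Definition strongly_rigid (R : realType) (X : Type) (e : X -> X -> R) : Prop :=
  forall x y u v, e x y = e u v -> e x y <> 0 ->
    (x = u /\ y = v) \/ (x = v /\ y = u).

(* For x <> y let e x y be a point of S lying in the band ((k+3)h, (k+4)h), where
   k = floor (d x y / h) and h = eps / 4.  Then d + 2h < e < d + 4h off the
   diagonal, and a shift of this kind turns any metric into a uniformly discrete
   metric with strict triangle inequalities, at uniform distance at most 4h = eps.
   Ubiquitous density yields, for each band, an injection of S into the part of S
   in that band; feeding it an injective code of the unordered pair {x, y} in S
   makes distinct pairs get distinct distances, i.e. e is strongly rigid.  The
   code exists because card X <= card S = card (S * S): S is infinite, and an
   infinite set absorbs its square, which is proved with Zorn's lemma on partial
   injections A * A -> A. *)

From HB Require Import structures.
From mathcomp Require Import all_boot all_order all_algebra.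
From mathcomp Require Import all_classical all_reals all_analysis.
From mathcomp Require Import lra.
Import Order.TTheory GRing.Theory Num.Theory.
Import numFieldNormedType.Exports.
Set Implicit Arguments.
Unset Strict Implicit.
Unset Printing Implicit Defensive.

Local Open Scope classical_set_scope.
Local Open Scope ring_scope.

(** * Infinite sets absorb their squares *)

Lemma pcard_le_funP {T} {U : pointedType} {A : set T} {B : set U} :
  (A #<= B)%card <-> exists2 f, set_fun A B f & set_inj A f.
Proof. by rewrite -injfunPex; split=> /pcard_leP. Qed.

Lemma card_le_setX {T1 T2 : Type} {U1 U2 : pointedType}
    (A1 : set T1) (A2 : set T2) (B1 : set U1) (B2 : set U2) :
  (A1 #<= B1)%card -> (A2 #<= B2)%card -> (A1 `*` A2 #<= B1 `*` B2)%card.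
Proof.
move=> /pcard_le_funP[f1 f1B f1inj] /pcard_le_funP[f2 f2B f2inj].
apply/pcard_le_funP; exists (fun z => (f1 z.1, f2 z.2)).
  by move=> z [/f1B ? /f2B ?].
move=> [x1 x2] [y1 y2] /set_mem[/= Ax1 Ax2] /set_mem[/= Ay1 Ay2] [e1 e2].
by congr pair; [apply: f1inj | apply: f2inj] => //; exact: mem_set.
Qed.

Section ChainUnion.
Context {I T U : Type} (dom : I -> set T) (fn : I -> T -> U).

Definition restricts (i j : I) :=
  dom i `<=` dom j /\ forall t, dom i t -> fn i t = fn j t.

Lemma restricts_premaximal (i0 : I) :
  (forall C, C !=set0 -> total_on C restricts ->
     exists j, forall i, C i -> restricts i j) ->
  exists m, forall j, restricts m j -> restricts j m.
Proof.
move=> chain_ub.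
have [|r s t|C Ctot|m m_max] := @ZL_preorder I i0 (fun i j => `[< restricts i j >]).
- by move=> i /=; apply/asboolP; split.
- move=> /= /asboolP[rs frs] /asboolP[st fst]; apply/asboolP; split=> [x /rs/st //|x rx].
  by rewrite frs // fst //; apply: rs.
- have [->|C0] := eqVneq C set0; first by exists i0.
  have [|j Cj] := chain_ub C (proj1 (set0P C) C0).
    by move=> i j Ci Cj; have [/asboolP|/asboolP] := Ctot i j Ci Cj; [left|right].
  by exists j => i /Cj /asboolP.
- by exists m => j mj; apply/asboolP/m_max/asboolP.
Qed.

Variables (C : set I) (u0 : U).
Hypothesis C_chain : total_on C restricts.

Definition chain_fun (t : T) : U :=
  if pselect (exists i, C i /\ dom i t) is left h then fn (projT1 (cid h)) t
  else u0.

Lemma chain_funE {i t} : C i -> dom i t -> chain_fun t = fn i t.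
Proof.
move=> Ci it; rewrite /chain_fun; case: pselect => [h|]; last by case; exists i.
case: (cid h) => j [Cj jt] /=.
by have [[_ ->]|[_ ->]] := C_chain Ci Cj.
Qed.

Lemma chain_dom2 {i j t t'} : C i -> C j -> dom i t -> dom j t' ->
  exists2 k, C k & dom k t /\ dom k t'.
Proof.
move=> Ci Cj it jt'; have [[ij _]|[ji _]] := C_chain Ci Cj.
  by exists j => //; split => //; apply: ij.
by exists i => //; split => //; apply: ji.
Qed.

Lemma chain_fun_inj : (forall i, C i -> set_inj (dom i) (fn i)) ->
  set_inj (\bigcup_(i in C) dom i) chain_fun.
Proof.
move=> inj t t' /set_mem[i Ci it] /set_mem[j Cj jt'].
have [k Ck [kt kt']] := chain_dom2 Ci Cj it jt'.
rewrite (chain_funE Ck kt) (chain_funE Ck kt').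
exact: (inj k Ck) (mem_set kt) (mem_set kt').
Qed.

End ChainUnion.

Section CardComparability.
Context {T U : pointedType} (A : set T) (B : set U).

Record partial_injection := PartialInjection {
  pi_dom : set T;
  pi_fun : T -> U;
  pi_dom_sub : pi_dom `<=` A;
  pi_fun_sub : set_fun pi_dom B pi_fun;
  pi_fun_inj : set_inj pi_dom pi_fun }.

Local Notation extends := (restricts pi_dom pi_fun).

Lemma partial_injection_chain_ub (C : set partial_injection) :
  total_on C extends -> exists j, forall i, C i -> extends i j.
Proof.
move=> C_chain; pose D := \bigcup_(i in C) pi_dom i.
have DA : D `<=` A by move=> t [i _ /pi_dom_sub].
have fB : set_fun D B (chain_fun pi_dom pi_fun C point).
  by move=> t [i Ci it]; rewrite (chain_funE point C_chain Ci it); apply: pi_fun_sub.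
have finj : set_inj D (chain_fun pi_dom pi_fun C point) :=
  chain_fun_inj C_chain (fun i _ => @pi_fun_inj i).
exists (@PartialInjection _ _ DA fB finj) => i Ci; split=> [t it|t it]; first by exists i.
by rewrite /= (chain_funE point C_chain Ci it).
Qed.

Lemma partial_injection_extend (i : partial_injection) a b :
  A a -> ~ pi_dom i a -> B b -> ~ (pi_fun i @` pi_dom i) b ->
  exists j, extends i j /\ ~ extends j i.
Proof.
move=> Aa ia Bb ib.
pose f t := if t == a then b else pi_fun i t.
have DA : pi_dom i `|` [set a] `<=` A by move=> t [/pi_dom_sub|->].
have fB : set_fun (pi_dom i `|` [set a]) B f.
  by move=> t [it|->]; rewrite /f; case: eqP => // _; apply: pi_fun_sub.
have finj : set_inj (pi_dom i `|` [set a]) f.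
  move=> t t' /set_mem[it|->] /set_mem[it'|->]; rewrite /f.
  - case: eqP => [ta|_]; first by rewrite ta in it.
    case: eqP => [ta'|_]; first by rewrite ta' in it'.
    exact: pi_fun_inj (mem_set it) (mem_set it').
  - by rewrite eqxx; case: eqP => // _ fb; case: ib; exists t.
  - by rewrite eqxx; case: eqP => // _ fb; case: ib; exists t'.
  - by [].
exists (@PartialInjection _ _ DA fB finj); split; last by move=> [/(_ a (or_intror erefl))].
split=> [t it|t it]; first by left.
by rewrite /= /f; case: eqP => // ta; rewrite ta in it.
Qed.

End CardComparability.

Lemma card_le_total {T U : pointedType} (A : set T) (B : set U) :
  (A #<= B)%card \/ (B #<= A)%card.
Proof.
have i0 : partial_injection A B.
  by apply: (@PartialInjection _ _ _ _ set0 (fun=> point)) => [t|t|t t' /set_mem] [].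
have [m m_max] := restricts_premaximal i0 (fun C _ => @partial_injection_chain_ub _ _ A B C).
have [Adom|/existsNP[a /not_implyP[Aa ma]]] := pselect (A `<=` pi_dom m); last first.
  have [Bim|/existsNP[b /not_implyP[Bb mb]]] := pselect (B `<=` pi_fun m @` pi_dom m); last first.
    by have [j [mj []]] := partial_injection_extend Aa ma Bb mb; apply: m_max.
  right; apply: card_le_trans (subset_card_le Bim) _.
  have := inj_card_eq (@pi_fun_inj _ _ _ _ m); rewrite card_eq_le => /andP[+ _].
  by move/card_le_trans; apply; apply: subset_card_le; apply: pi_dom_sub.
left; apply/pcard_le_funP; exists (pi_fun m).
  by move=> t /Adom; apply: pi_fun_sub.
by move=> t t' /set_mem/Adom it /set_mem/Adom it'; apply: pi_fun_inj; apply: mem_set.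
Qed.

Lemma card_setU_le_setX {T : pointedType} (B P : set T) :
  infinite_set B -> (P #<= B)%card -> (B `|` P #<= B `*` B)%card.
Proof.
move=> /infiniteP/pcard_le_funP[g gB ginj] /pcard_le_funP[j jB jinj].
have g01 : g 0%N <> g 1%N by move/(ginj _ _ (mem_set I) (mem_set I)).
pose m u := if pselect (B u) then (g 0%N, u) else (g 1%N, j u).
apply/pcard_le_funP; exists m.
  by move=> u Pu; rewrite /m; case: pselect => [Bu|nBu]; split=> //=;
    [apply: gB | apply: gB | case: Pu => // /jB].
move=> u u' /set_mem Pu /set_mem Pu'; rewrite /m.
case: pselect => Bu; case: pselect => Bu' /pair_equal_spec[e1 e2] //.
all: try by [case: (g01 e1) | case: (g01 (esym e1))].
case: Pu Pu' => // Pu [] // Pu'.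
exact: jinj (mem_set Pu) (mem_set Pu') e2.
Qed.

Section SquareAbsorption.
Context {T : pointedType} (A : set T).

Record pairing := Pairing {
  pr_dom : set T;
  pr_fun : T * T -> T;
  pr_dom_sub : pr_dom `<=` A;
  pr_dom_infinite : infinite_set pr_dom;
  pr_fun_sub : set_fun (pr_dom `*` pr_dom) pr_dom pr_fun;
  pr_fun_inj : set_inj (pr_dom `*` pr_dom) pr_fun }.

Local Notation extends := (restricts (fun p => pr_dom p `*` pr_dom p) pr_fun).

Lemma pairing_card (p : pairing) : (pr_dom p `*` pr_dom p #<= pr_dom p)%card.
Proof. by apply/pcard_le_funP; exists (pr_fun p); [apply: pr_fun_sub | apply: pr_fun_inj]. Qed.

Lemma pairing_inhabited : infinite_set A -> inhabited pairing.
Proof.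
move=> /infiniteP/pcard_le_funP[g gA ginj]; pose D := g @` setT.
have DA : D `<=` A by move=> _ [n _ <-]; apply: gA.
have : (D #= [set: nat])%card := inj_card_eq ginj.
rewrite card_eq_le => /andP[Dnat natD].
have Dinf : infinite_set D by apply/infiniteP.
have DD : (D `*` D #<= D)%card.
  apply: card_le_trans (card_le_setX Dnat Dnat) _; rewrite setXTT.
  have := card_nat2; rewrite card_eq_le => /andP[nat2 _].
  exact: card_le_trans nat2 natD.
by have /pcard_le_funP[f fD finj] := DD; constructor; exact: (Pairing DA Dinf fD finj).
Qed.

Lemma pairing_chain_ub (C : set pairing) : C !=set0 -> total_on C extends ->
  exists q, forall p, C p -> extends p q.
Proof.
move=> [p0 Cp0] C_chain; pose D := \bigcup_(p in C) pr_dom p.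
pose f := chain_fun (fun p => pr_dom p `*` pr_dom p) pr_fun C point.
have D2 : D `*` D `<=` \bigcup_(p in C) (pr_dom p `*` pr_dom p).
  move=> [u v] [/= [i Ci iu] [j Cj jv]].
  have [k Ck [[ku _] [_ kv]]] := chain_dom2 C_chain Ci Cj
    (conj iu iu : (pr_dom i `*` pr_dom i) (u, u)) (conj jv jv : (pr_dom j `*` pr_dom j) (v, v)).
  by exists k.
have DA : D `<=` A by move=> t [p _ /pr_dom_sub].
have Dinf : infinite_set D.
  have p0D : pr_dom p0 `<=` D by move=> t p0t; exists p0.
  exact: sub_infinite_set p0D (@pr_dom_infinite p0).
have fD : set_fun (D `*` D) D f.
  move=> z /D2[p Cp pz]; rewrite /f (chain_funE point C_chain Cp pz).
  by exists p => //; apply: pr_fun_sub.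
have finj : set_inj (D `*` D) f.
  move=> z z' /set_mem/D2 zD /set_mem/D2 z'D.
  exact: (chain_fun_inj C_chain (fun p _ => @pr_fun_inj p)) (mem_set zD) (mem_set z'D).
exists (Pairing DA Dinf fD finj) => p Cp; split.
  by move=> [u v] [/= pu pv]; split; exists p.
by move=> z pz; rewrite /= /f (chain_funE point C_chain Cp pz).
Qed.

Lemma pairing_extend (p : pairing) : (pr_dom p #<= A `\` pr_dom p)%card ->
  exists q, extends p q /\ ~ extends q p.
Proof.
set B := pr_dom p; set f := pr_fun p.
move=> /pcard_le_funP[k kAB kinj]; set K := k @` B; set D := B `|` K.
have kB b : B b -> ~ B (k b) by move=> /kAB[].
have fB z : (B `*` B) z -> B (f z) by apply: pr_fun_sub.
have [e eB einj] : exists2 e, set_fun D B e & set_inj D e.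
  apply/pcard_le_funP; apply: card_le_trans (pairing_card p).
  apply: card_setU_le_setX; first exact: pr_dom_infinite.
  by have := inj_card_eq kinj; rewrite card_eq_le => /andP[].
have eB2 z : (D `*` D) z -> (B `*` B) (e z.1, e z.2).
  by move=> [/eB ? /eB ?].
(* Pairs outside B * B are sent into K = k @` B, which is disjoint from B. *)
pose g z := if pselect ((B `*` B) z) then f z else k (f (e z.1, e z.2)).
have DA : D `<=` A by move=> t [/pr_dom_sub //|[b /kAB[+ _] <-]].
have Dinf : infinite_set D.
  have BD : B `<=` D by move=> t; left.
  exact: sub_infinite_set BD (@pr_dom_infinite p).
have gD : set_fun (D `*` D) D g.
  move=> z zD; rewrite /g; case: pselect => [zB|nzB]; first by left; apply: fB.
  by right; exists (f (e z.1, e z.2)) => //; apply/fB/eB2.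
have ginj : set_inj (D `*` D) g.
  move=> z z' /set_mem zD /set_mem z'D; rewrite /g.
  case: pselect => zB; case: pselect => z'B /=.
  - exact: pr_fun_inj (mem_set zB) (mem_set z'B).
  - by move=> fz; case: (kB _ (fB _ (eB2 _ z'D))); rewrite -fz; apply: fB.
  - by move=> fz; case: (kB _ (fB _ (eB2 _ zD))); rewrite fz; apply: fB.
  move=> /(kinj _ _ (mem_set (fB _ (eB2 _ zD))) (mem_set (fB _ (eB2 _ z'D)))).
  move=> /(pr_fun_inj (mem_set (eB2 _ zD)) (mem_set (eB2 _ z'D))) [e1 e2].
  case: z z' zD z'D {zB z'B} e1 e2 => [u v] [u' v'] [/= uD vD] [/= u'D v'D] e1 e2.
  by rewrite (einj _ _ (mem_set uD) (mem_set u'D) e1) (einj _ _ (mem_set vD) (mem_set v'D) e2).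
exists (Pairing DA Dinf gD ginj); split.
  split=> [[u v] [/= Bu Bv]|z zB]; first by split; left.
  by rewrite /= /g; case: pselect.
have [b Bb] := infinite_setN0 (@pr_dom_infinite p).
have kbD : D (k b) by right; exists b.
by move=> [/(_ (k b, k b) (conj kbD kbD)) [/= Bkb _] _]; exact: kB _ Bb Bkb.
Qed.

Lemma pairing_absorbs (p : pairing) :
  (forall q, extends p q -> extends q p) -> (A #<= pr_dom p)%card.
Proof.
move=> p_max; set B := pr_dom p.
have ADB : (A `\` B #<= B)%card.
  have [BAB|//] := card_le_total B (A `\` B).
  by have [q [pq []]] := pairing_extend BAB; apply: p_max.
rewrite -(setDUK (@pr_dom_sub p)).
apply: card_le_trans (pairing_card p).
exact: card_setU_le_setX (@pr_dom_infinite p) ADB.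
Qed.

End SquareAbsorption.

Theorem card_setXX_le (T : pointedType) (A : set T) :
  infinite_set A -> (A `*` A #<= A)%card.
Proof.
move=> Ainf; have [p0] := pairing_inhabited Ainf.
have [p p_max] := restricts_premaximal p0 (@pairing_chain_ub _ A).
have AB := pairing_absorbs p_max.
apply: card_le_trans (card_le_setX AB AB) _.
exact: card_le_trans (pairing_card p) (subset_card_le (@pr_dom_sub _ _ p)).
Qed.

(** * Perturbing a metric into a rigid S-valued metric *)

Section ShiftedMetric.
Context {R : realType} {X : Type} (d e : X -> X -> R) (h : R).
Hypotheses (d_metric : is_metric d) (h_gt0 : 0 < h).
Hypotheses (e_diag : forall x, e x x = 0) (e_sym : forall x y, e x y = e y x).
Hypothesis e_shift : forall x y, x <> y -> d x y + 2 * h < e x y < d x y + 4 * h.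

(* [lra] does not look at section hypotheses, hence the local copies [h0]. *)

Let d_ge0 x y : 0 <= d x y. Proof. by case: d_metric. Qed.

Lemma shifted_gt x y : x <> y -> 2 * h < e x y.
Proof. by move=> /e_shift/andP[exy _]; have := d_ge0 x y => dxy; lra. Qed.

Lemma shifted_ge0 x y : 0 <= e x y.
Proof.
have h0 := h_gt0.
by have [->|/shifted_gt exy] := pselect (x = y); [rewrite e_diag | lra].
Qed.

Lemma shifted_triangle_lt x y z : x <> y -> y <> z -> x <> z ->
  e x y < e x z + e z y.
Proof.
move=> xy yz xz; have [_ _ _ d_tri] := d_metric.
have /andP[_ exy] := e_shift xy; have /andP[exz _] := e_shift xz.
have /andP[ezy _] : d z y + 2 * h < e z y < d z y + 4 * h by apply: e_shift => /esym.
by have := d_tri x y z; lra.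
Qed.

Lemma shifted_is_metric : is_metric e.
Proof.
have h0 := h_gt0; split=> [x y|x y|//|x y z]; first exact: shifted_ge0.
  by split=> [exy|->//]; apply: contrapT => /shifted_gt gt; lra.
have [->|xy] := pselect (x = y); first by rewrite e_diag addr_ge0 ?shifted_ge0.
have [->|xz] := pselect (x = z); first by rewrite e_diag add0r.
have [->|zy] := pselect (z = y); first by rewrite e_diag addr0.
by apply/ltW/shifted_triangle_lt => // /esym.
Qed.

Lemma shifted_metric_open (A : set X) : metric_open e A.
Proof.
have h0 := h_gt0; move=> x Ax; exists (2 * h) => [|y]; first lra.
by have [<-//|/shifted_gt gt lt] := pselect (x = y); lra.
Qed.

Lemma shifted_uniformly_discrete : uniformly_discrete e.
Proof. by have h0 := h_gt0; exists (2 * h) => [|x y /shifted_gt]; first lra. Qed.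

Lemma shifted_DX_le : (DX d e <= (4 * h)%:E)%E.
Proof.
have h0 := h_gt0; apply: ge_ereal_sup => _ [[x y] _ <-] /=; rewrite lee_fin.
have [<-|/e_shift/andP[lo hi]] := pselect (x = y).
  by have [_ /(_ x x)[_ /(_ erefl) ->] _ _] := d_metric; rewrite e_diag subr0 normr0; lra.
by rewrite ler_norml; apply/andP; split; lra.
Qed.

End ShiftedMetric.

Lemma minmax_eq {disp : Order.disp_t} {T : orderType disp} (a b c e : T) :
  Order.min a b = Order.min c e -> Order.max a b = Order.max c e ->
  (a = c /\ b = e) \/ (a = e /\ b = c).
Proof. by case: (leP a b); case: (leP c e) => _ _ -> ->; [left|right|right|left]. Qed.

Lemma unordered_pair_code (R : realType) (S : set R) (X : Type) :
  ([set: X] #<= S)%card -> (S `*` S #<= S)%card ->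
  exists c : X -> X -> R, [/\ forall x y, S (c x y),
    forall x y, c x y = c y x &
    forall x y u v, c x y = c u v -> (x = u /\ y = v) \/ (x = v /\ y = u)].
Proof.
move=> /pcard_le_funP[i iS iinj] /pcard_le_funP[F FS Finj].
have iS' x : S (i x) by apply: iS.
have mmS x y : (S `*` S) (Num.min (i x) (i y), Num.max (i x) (i y)).
  by split; rewrite /=; case: leP.
exists (fun x y => F (Num.min (i x) (i y), Num.max (i x) (i y))); split.
- by move=> x y; apply/FS/mmS.
- by move=> x y; rewrite minC maxC.
move=> x y u v /(Finj _ _ (mem_set (mmS x y)) (mem_set (mmS u v))) [].
have ieq a b : i a = i b -> a = b by move/(iinj _ _ (mem_set I) (mem_set I)).
by move=> /minmax_eq /[apply] -[[/ieq -> /ieq ->]|[/ieq -> /ieq ->]]; [left|right].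
Qed.

Lemma ubiquitously_dense_card_le (R : realType) (S : set R) (a b : R) :
  ubiquitously_dense_nonneg S -> 0 <= a -> a < b ->
  (S #<= S `&` [set x | a < x < b])%card.
Proof.
move=> Sud a0 ab; pose V := [set x : R | a < x] `&` [set x | x < b].
have oV : open V by apply: openI; [exact: open_gt | exact: open_lt].
have V0 : (V `&` [set x | 0 <= x]) !=set0.
  by exists ((a + b) / 2); split; [split => /=|rewrite /=]; lra.
have := Sud V oV V0; rewrite card_eq_le => /andP[_ /card_le_trans]; apply.
by apply: subset_card_le => x [[[/= ax xb] _] Sx]; split=> //; apply/andP.
Qed.

Lemma ubiquitously_dense_infinite (R : realType) (S : set R) :
  S !=set0 -> ubiquitously_dense_nonneg S -> infinite_set S.
Proof.
move=> [s0 Ss0] Sud; apply/infiniteP/pcard_le_funP.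
have /choice[s sP] n : exists t, S t /\ n%:R < t < n%:R + 1.
  have n1 : (n%:R : R) < n%:R + 1 by rewrite ltrDl.
  have /pcard_le_funP[psi psiS _] := ubiquitously_dense_card_le Sud (ler0n R n) n1.
  by have [? ?] := psiS _ Ss0; exists (psi s0).
exists s => [n _|n m _ _ snm]; first by case: (sP n).
have floor_s k : Num.floor (s k) = k%:Z.
  by apply: floor_def; case: (sP k) => _ /andP[? ?]; rewrite intrD -!pmulrn; apply/andP; split; lra.
by apply/eqP; rewrite -eqz_nat -floor_s snm floor_s.
Qed.

Definition band (R : realType) (h : R) (z : int) : set R :=
  [set t | z%:~R * h < t < z%:~R * h + h].

Lemma band_floor (R : realType) (h t : R) (z : int) : 0 < h ->
  band h z t -> Num.floor (t / h) = z.
Proof.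
move=> h0 /andP[lo hi]; apply: floor_def.
by rewrite ler_pdivlMr // ltr_pdivrMr // intrD mulrDl mul1r; apply/andP; split; lra.
Qed.

Lemma band_inj (R : realType) (h t : R) (z1 z2 : int) : 0 < h ->
  band h z1 t -> band h z2 t -> z1 = z2.
Proof. by move=> h0 /(band_floor h0) <- /(band_floor h0). Qed.

Lemma band_floor_shift (R : realType) (h t : R) : 0 < h ->
  band h (Num.floor (t / h) + 3) `<=` [set s | t + 2 * h < s < t + 4 * h].
Proof.
move=> h0 s /andP[lo hi]; have /andP[fl fh] := floor_itv (t / h).
rewrite ler_pdivlMr // in fl; rewrite ltr_pdivrMr // in fh.
move: lo hi fl fh; rewrite !intrD !mulrDl mul1r; move: (Num.floor _)%:~R => F.
by move=> /= lo hi fl fh; apply/andP; split; lra.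
Qed.

Lemma exists_rigid_shift (R : realType) (S : set R) (X : Type)
    (d : X -> X -> R) (h : R) :
  S 0 -> ubiquitously_dense_nonneg S -> ([set: X] #<= S)%card ->
  (forall x y, 0 <= d x y) -> (forall x y, d x y = d y x) -> 0 < h ->
  exists e : X -> X -> R, [/\ forall x y, S (e x y), forall x, e x x = 0,
    forall x y, e x y = e y x,
    forall x y, x <> y -> d x y + 2 * h < e x y < d x y + 4 * h &
    strongly_rigid e].
Proof.
move=> S0 Sud XS d_ge0 d_sym h0.
have Sinf := ubiquitously_dense_infinite (ex_intro _ 0 S0) Sud.
have [c [cS c_sym c_inj]] := unordered_pair_code XS (card_setXX_le Sinf).
have /choice[psi psiP] (z : int) : exists psi, 0 <= z ->
    set_fun S (S `&` band h z) psi /\ set_inj S psi.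
  have [z0|_] := boolP (0 <= z); last by exists id.
  have zh : 0 <= z%:~R * h by rewrite mulr_ge0 ?ler0z // ltW.
  have zhh : z%:~R * h < z%:~R * h + h by rewrite ltrDl.
  have /pcard_le_funP[psi ? ?] := ubiquitously_dense_card_le Sud zh zhh.
  by exists psi.
pose lvl x y := Num.floor (d x y / h) + 3.
have lvl_ge0 x y : 0 <= lvl x y by rewrite addr_ge0 // floor_ge0 divr_ge0 // ltW.
pose e x y := if pselect (x = y) then 0 else psi (lvl x y) (c x y).
have e_band x y : x <> y -> (S `&` band h (lvl x y)) (e x y).
  by move=> xy; rewrite /e; case: pselect => // nxy; apply: (psiP _ (lvl_ge0 x y)).1.
have e_psi x y : x <> y -> e x y = psi (lvl x y) (c x y).
  by move=> xy; rewrite /e; case: pselect.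
exists e; split.
- by move=> x y; have [<-|/e_band[]//] := pselect (x = y); rewrite /e; case: pselect.
- by move=> x; rewrite /e; case: pselect.
- move=> x y; have [<-//|xy] := pselect (x = y).
  have yx : y <> x by move/esym.
  by rewrite (e_psi _ _ xy) (e_psi _ _ yx) /lvl d_sym c_sym.
- by move=> x y /e_band[_ /band_floor_shift]; apply.
move=> x y u v exy e0.
have xy : x <> y by move=> xy; apply: e0; rewrite xy /e; case: pselect.
have uv : u <> v by move=> uv; apply: e0; rewrite exy uv /e; case: pselect.
have [_ bxy] := e_band x y xy; have [_ buv] := e_band u v uv.
rewrite exy in bxy; have luv := band_inj h0 bxy buv.
move: exy; rewrite !e_psi // luv => /(psiP _ (lvl_ge0 u v)).2.
by move=> /(_ (mem_set (cS _ _)) (mem_set (cS _ _))) /c_inj.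
Qed.

Theorem theorem2p5 (R : realType) (S : set R)
  (HS0 : S 0) (HSpos : S `<=` [set x | 0 <= x])
  (HSud : ubiquitously_dense_nonneg S)
  (X : topologicalType) (Hdisc : forall A : set X, open A)
  (HcardX : ([set: X] #<= S)%card)
  (d : X -> X -> R) (Hd : Met [set x | 0 <= x] d)
  (eps : R) (Heps : 0 < eps) :
  exists e : X -> X -> R,
    [/\ Met S e,
        (DX d e <= eps%:E)%E,
        uniformly_discrete e,
        (forall x y z, x <> y -> y <> z -> x <> z -> e x y < e x z + e z y) &
        strongly_rigid e].
Proof.
have [d_metric _ _] := Hd; have [d_ge0 _ d_sym _] := d_metric.
have h0 : 0 < eps / 4 by rewrite divr_gt0.
have [e [eS e_diag e_sym e_shift e_rigid]] :=
  exists_rigid_shift HS0 HSud HcardX d_ge0 d_sym h0.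
exists e; split=> //.
- split=> //; first exact: shifted_is_metric d_metric h0 e_diag e_sym e_shift.
  move=> A; split=> [_ x Ax|_]; last exact: Hdisc.
  exact (shifted_metric_open d_metric h0 e_shift Ax).
- by have := shifted_DX_le d_metric h0 e_diag e_shift; rewrite mulrC divfK.
- exact: shifted_uniformly_discrete d_metric h0 e_shift.
- exact: shifted_triangle_lt d_metric e_shift.
Qed.
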